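(* Let $B$ be a finite set of Boolean functions. There exists an MSO formula $\theta_{\mathit{extension}}$ over the vocabulary $\tau_{B,\mathit{dl}}$ such that for every $B$-default theory $(W,D)$: $(W,D)$ possesses a stable extension if and only if $\mathcal{A}_{(W,D)}\models\theta_{\mathit{extension}}$.
   Context: $B$-formulae are propositional formulae built from variables using the functions in $B$ (0-ary ones are constants). A $B$-default rule is a triple $\frac{\alpha:\beta}{\gamma}$ of $B$-formulae (prerequisite $\alpha$, justification $\beta$, conclusion $\gamma$); a $B$-default theory $(W,D)$ is a set $W$ of $B$-formulae and a set $D$ of $B$-default rules. For a set $E$ of formulae, $\Gamma(E)$ is the smallest set of formulae with $W\subseteq\Gamma(E)$, $\Gamma(E)$ closed under propositional consequence, and $\gamma\in\Gamma(E)$ whenever $\frac{\alpha:\beta}{\gamma}\in D$, $\alpha\in\Gamma(E)$ and $\neg\beta\notin E$. A stable extension of $(W,D)$ is a set $E$ with $E=\Gamma(E)$. The vocabulary $\tau_{B,\mathit{dl}}$ consists of unary symbols $\mathrm{const}_f$ (for 0-ary $f\in B$), binary symbols $\mathrm{conn}_{f,i}$ ($f\in B$, $1\le i\le\mathrm{arity}(f)$), unary symbols $\mathrm{var},\mathrm{repr},\mathrm{kb},\mathrm{default}$ and binary symbols $\mathrm{prem},\mathrm{just},\mathrm{concl}$. The structure $\mathcal{A}_{(W,D)}$ has as universe the set of subformulae of the formulae in $W\cup\{\alpha,\beta,\gamma,\neg\beta \mid \frac{\alpha:\beta}{\gamma}\in D\}$ together with one new element for each default in $D$; $\mathrm{var}(x)$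 holds iff $x$ is a variable, $\mathrm{repr}(x)$ iff $x$ is one of the formulae of $W$ or one of the $\alpha,\beta,\gamma$ of defaults, $\mathrm{const}_f(x)$ iff $x$ is the constant $f$, $\mathrm{conn}_{f,i}(x,y)$ iff $x$ is the $i$-th argument of the function $f$ at the root of $y$, $\mathrm{kb}(x)$ iff $x\in W$, $\mathrm{default}(x)$ iff $x$ represents a default of $D$, and $\mathrm{prem}(x,y)$ (resp. $\mathrm{just}(x,y)$, $\mathrm{concl}(x,y)$) iff $y$ represents a default $\frac{\alpha:\beta}{\gamma}$ and $x$ is its $\alpha$ (resp. $\beta$, $\gamma$). *)

From Stdlib Require List.
From mathcomp Require Import all_boot.
Set Implicit Arguments.
Unset Strict Implicit.
Unset Printing Implicit Defensive.

Definition BoolFun : Type := {n : nat & {ffun n.-tuple bool -> bool}}.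

Definition arity (f : BoolFun) : nat := projT1 f.

(* Propositional formulae built from variables (indexed by nat) using
   arbitrary Boolean functions.  0-ary functions are constants. *)
Inductive form : Type :=
| Var of nat
| App of BoolFun & seq form.

Inductive wf : form -> Prop :=
| wf_var n : wf (Var n)
| wf_app f args : size args = arity f ->
    (forall a, List.In a args -> wf a) -> wf (App f args).

Inductive isBform (B : seq BoolFun) : form -> Prop :=
| bf_var n : isBform B (Var n)
| bf_app f args : List.In f B -> size args = arity f ->
    (forall a, List.In a args -> isBform B a) -> isBform B (App f args).

(* Evaluation under an assignment (ill-formed applications evaluate to false). *)
Fixpoint eval (a : nat -> bool) (phi : form) : bool :=
  match phi with
  | Var n => a n
  | App (existT n g) args =>
      match (insub (map (eval a) args) : option (n.-tuple bool)) with
      | Some t => g t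
      | None => false
      end
  end.

Definition negF : BoolFun :=
  existT (fun n => {ffun n.-tuple bool -> bool}) 1
         [ffun t : 1.-tuple bool => ~~ tnth t ord0].

Definition fneg (phi : form) : form := App negF [:: phi].

Definition entails (X : form -> Prop) (phi : form) : Prop :=
  forall a : nat -> bool, (forall psi, X psi -> eval a psi) -> eval a phi.

Record default := Default { dprem : form; djust : form; dconcl : form }.

Definition d0 : default := Default (Var 0) (Var 0) (Var 0).

Definition B_default_theory (B : seq BoolFun) (W : seq form) (D : seq default)
  : Prop :=
  (forall w, List.In w W -> isBform B w) /\
  (forall d, List.In d D ->
     isBform B (dprem d) /\ isBform B (djust d) /\ isBform B (dconcl d)) /\
  List.NoDup D.

Definition Gamma_closed (W : seq form) (D : seq default) (E X : form -> Prop)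
  : Prop :=
  (forall w, List.In w W -> X w) /\
  (forall phi, wf phi -> entails X phi -> X phi) /\
  (forall d, List.In d D -> X (dprem d) -> ~ E (fneg (djust d)) -> X (dconcl d)).

Definition Gamma (W : seq form) (D : seq default) (E : form -> Prop)
  (phi : form) : Prop :=
  forall X, Gamma_closed W D E X -> X phi.

Definition stable_extension (W : seq form) (D : seq default)
  (E : form -> Prop) : Prop :=
  forall phi, E phi <-> Gamma W D E phi.

Definition has_stable_extension (W : seq form) (D : seq default) : Prop :=
  exists E, stable_extension W D E.

Inductive tau_sym : Type :=
| SConst of BoolFun
| SConn of BoolFun & nat
| SVar | SRepr | SKb | SDefault
| SPrem | SJust | SConcl.

Definition sym_arity (R : tau_sym) : nat :=
  match R with
  | SConst _ | SVar | SRepr | SKb | SDefault => 1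
  | SConn _ _ | SPrem | SJust | SConcl => 2
  end.

Definition in_tau (B : seq BoolFun) (R : tau_sym) : Prop :=
  match R with
  | SConst f => List.In f B /\ arity f = 0
  | SConn f i => List.In f B /\ 1 <= i <= arity f
  | _ => True
  end.

Inductive mso : Type :=
| MRel of tau_sym & seq nat
| MEq of nat & nat
| MIn of nat & nat
| MNot of mso
| MAnd of mso & mso
| MEx1 of nat & mso
| MEx2 of nat & mso.

Fixpoint over_tau (B : seq BoolFun) (th : mso) : Prop :=
  match th with
  | MRel R xs => in_tau B R /\ size xs = sym_arity R
  | MEq _ _ | MIn _ _ => True
  | MNot t => over_tau B t
  | MAnd t1 t2 => over_tau B t1 /\ over_tau B t2
  | MEx1 _ t | MEx2 _ t => over_tau B t
  end.

Fixpoint closed_in (b1 b2 : seq nat) (th : mso) : bool :=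
  match th with
  | MRel _ xs => all (fun x => x \in b1) xs
  | MEq x y => (x \in b1) && (y \in b1)
  | MIn x X => (x \in b1) && (X \in b2)
  | MNot t => closed_in b1 b2 t
  | MAnd t1 t2 => closed_in b1 b2 t1 && closed_in b1 b2 t2
  | MEx1 x t => closed_in (x :: b1) b2 t
  | MEx2 X t => closed_in b1 (X :: b2) t
  end.

Definition sentence (th : mso) : Prop := closed_in [::] [::] th.

Unset Implicit Arguments.
Record structure := Structure {
  carrier : Type;
  dom : carrier -> Prop;
  rel : tau_sym -> seq carrier -> Prop }.

Definition upd {T : Type} (v : nat -> T) (x : nat) (u : T) : nat -> T :=
  fun y => if y == x then u else v y.

Fixpoint sat (A : structure) (v1 : nat -> carrier A)
  (v2 : nat -> carrier A -> Prop) (th : mso) : Prop :=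
  match th with
  | MRel R xs => rel A R (map v1 xs)
  | MEq x y => v1 x = v1 y
  | MIn x X => v2 X (v1 x)
  | MNot t => ~ sat A v1 v2 t
  | MAnd t1 t2 => sat A v1 v2 t1 /\ sat A v1 v2 t2
  | MEx1 x t => exists u, dom A u /\ sat A (upd v1 x u) v2 t
  | MEx2 X t => exists P : carrier A -> Prop,
      (forall u, P u -> dom A u) /\ sat A v1 (upd v2 X P) t
  end.

(* A |= th (th is meant to be a sentence, so the assignment is irrelevant). *)
Definition models (A : structure) (th : mso) : Prop :=
  forall v1 v2, sat A v1 v2 th.

(* Elements: formulae (subformulae) and one new element per default
   (the default at position i of D). *)
Inductive elt : Type :=
| EF of form
| ED of nat.

Inductive subform : form -> form -> Prop :=
| sf_refl phi : subform phi phi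
| sf_arg phi f args a : List.In a args -> subform phi a ->
    subform phi (App f args).

Definition roots (W : seq form) (D : seq default) : seq form :=
  W ++ flatten (map (fun d => [:: dprem d; djust d; dconcl d; fneg (djust d)]) D).

Definition dl_dom (W : seq form) (D : seq default) (u : elt) : Prop :=
  match u with
  | EF phi => exists psi, List.In psi (roots W D) /\ subform phi psi
  | ED i => i < size D
  end.

Definition dl_rel (W : seq form) (D : seq default) (R : tau_sym)
  (xs : seq elt) : Prop :=
  match R, xs with
  | SConst f, [:: x] => x = EF (App f [::])
  | SConn f i, [:: x; y] => exists args,
      y = EF (App f args) /\ 1 <= i <= size args /\
      x = EF (nth (Var 0) args i.-1)
  | SVar, [:: x] => exists n, x = EF (Var n)
  | SRepr, [:: x] => exists phi, x = EF phi /\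
      (List.In phi W \/ exists d, List.In d D /\
         (phi = dprem d \/ phi = djust d \/ phi = dconcl d))
  | SKb, [:: x] => exists phi, x = EF phi /\ List.In phi W
  | SDefault, [:: x] => exists i, x = ED i /\ i < size D
  | SPrem, [:: x; y] => exists i, y = ED i /\ i < size D /\
      x = EF (dprem (nth d0 D i))
  | SJust, [:: x; y] => exists i, y = ED i /\ i < size D /\
      x = EF (djust (nth d0 D i))
  | SConcl, [:: x; y] => exists i, y = ED i /\ i < size D /\
      x = EF (dconcl (nth d0 D i))
  | _, _ => False
  end.

Definition A_dl (W : seq form) (D : seq default) : structure :=
  Structure elt (dl_dom W D) (dl_rel W D).

From mathcomp Require Import all_boot zify.
From Stdlib Require Import Classical ClassicalEpsilon.
Set Implicit Arguments.
Unset Strict Implicit.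
Unset Printing Implicit Defensive.

(* A stable extension is determined by its generating defaults G: it is the
   deductive closure of W together with the conclusions of G, and it is stable iff
   G is the least set of defaults closed under firing every default whose premise
   follows from the set built so far and whose justification is consistent with
   the extension.  This characterisation quantifies only over sets of defaults and
   over entailment from W plus conclusions, and entailment is MSO-definable on
   A_(W,D): a countermodel is a set S of variables together with the set T of
   subformulae true under S, and T is pinned down by the truth tables of the
   finitely many functions of B, written as Shannon expansions over the argument
   positions. *)

Lemma In_nth (T : Type) (x0 : T) (s : seq T) i :
  i < size s -> List.In (nth x0 s i) s.
Proof.
elim: s i => [//|x s IH] [|i] /=; first by left.
by move=> lt_i; right; apply: IH.
Qed.

Lemma In_nthP (T : Type) (x0 : T) (s : seq T) x :
  List.In x s -> exists2 i, i < size s & x = nth x0 s i.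
Proof.
elim: s => [//|y s IH] /= [<-|/IH [i lt_i ->]]; first by exists 0.
by exists i.+1.
Qed.

Lemma In_cat (T : Type) (x : T) (s1 s2 : seq T) :
  List.In x (s1 ++ s2) <-> List.In x s1 \/ List.In x s2.
Proof. by elim: s1 => [|y s1 IH] /=; [tauto | rewrite IH; tauto]. Qed.

Lemma entails_mono (X Y : form -> Prop) phi :
  (forall psi, X psi -> Y psi) -> entails X phi -> entails Y phi.
Proof. by move=> XY Xphi a Ya; apply: Xphi => psi /XY /Ya. Qed.

Lemma entails_cut (X Y : form -> Prop) phi :
  (forall psi, Y psi -> entails X psi) -> entails Y phi -> entails X phi.
Proof. by move=> XY Yphi a Xa; apply: Yphi => psi /XY; apply. Qed.

Lemma entails_assumption (X : form -> Prop) phi : X phi -> entails X phi.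
Proof. by move=> Xphi a; apply. Qed.

Lemma isBform_wf B phi : isBform B phi -> wf phi.
Proof. by elim=> [n|f args _ size_args _ IH]; constructor. Qed.

Lemma wf_fneg phi : wf phi -> wf (fneg phi).
Proof. by move=> wf_phi; constructor=> // a [<-|[]]. Qed.

Lemma B_default_theory_wf B W D : B_default_theory B W D ->
  (forall psi, List.In psi W -> wf psi) /\
  (forall d, List.In d D -> [/\ wf (dprem d), wf (djust d) & wf (dconcl d)]).
Proof.
case=> BW [BD _]; split=> [psi /BW /isBform_wf //|d /BD [Bp [Bj Bc]]].
by split; [exact: isBform_wf Bp | exact: isBform_wf Bj | exact: isBform_wf Bc].
Qed.

Lemma wf_App_size f args : wf (App f args) -> size args = arity f.
Proof. by move=> wf_f; inversion wf_f. Qed.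

(* The truth table of [f], read as [false] on argument lists of the wrong length. *)
Definition apply_fun (f : BoolFun) : seq bool -> bool :=
  let: existT n g := f in
  fun bs => if (insub bs : option (n.-tuple bool)) is Some t then g t else false.

Lemma eval_App a f args : eval a (App f args) = apply_fun f (map (eval a) args).
Proof. by case: f. Qed.

Lemma eval_fneg a phi : eval a (fneg phi) = ~~ eval a phi.
Proof.
rewrite /fneg eval_App /=; case: insubP => [t _ val_t|] //=.
by rewrite ffunE (tnth_nth false) val_t.
Qed.

(** * Stable extensions and generating defaults *)

Notation premise D i := (dprem (nth d0 D i)).
Notation justif D i := (djust (nth d0 D i)).
Notation conclusion D i := (dconcl (nth d0 D i)).

Section GeneratingDefaults.
Variables (W : seq form) (D : seq default).

Definition gen_base (Y : nat -> Prop) (psi : form) : Prop :=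
  List.In psi W \/ exists i, [/\ i < size D, Y i & psi = conclusion D i].

Definition closed_wrt (N : form -> Prop) (Y : nat -> Prop) : Prop :=
  forall i, i < size D -> entails (gen_base Y) (premise D i) ->
    ~ N (fneg (justif D i)) -> Y i.

Definition least_closed (N : form -> Prop) (G : nat -> Prop) : Prop :=
  closed_wrt N G /\
  forall Y, closed_wrt N Y -> forall i, i < size D -> G i -> Y i.

Definition Th (G : nat -> Prop) (phi : form) : Prop :=
  wf phi /\ entails (gen_base G) phi.

Lemma entails_gen_base_mono (Y Y' : nat -> Prop) phi :
  (forall i, i < size D -> Y i -> Y' i) ->
  entails (gen_base Y) phi -> entails (gen_base Y') phi.
Proof.
move=> YY'; apply: entails_mono => psi [W_psi|[i [lt_i Yi ->]]]; first by left.
by right; exists i; split=> //; apply: YY'.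
Qed.

Lemma entails_gen_base_ext (Y Y' : nat -> Prop) phi :
  (forall i, i < size D -> Y i <-> Y' i) ->
  entails (gen_base Y) phi <-> entails (gen_base Y') phi.
Proof. by move=> YY'; split; apply: entails_gen_base_mono => i /YY' ->. Qed.

Lemma closed_wrt_ext N N' Y Y' :
  (forall i, i < size D -> Y i <-> Y' i) ->
  (forall i, i < size D -> N (fneg (justif D i)) <-> N' (fneg (justif D i))) ->
  closed_wrt N Y -> closed_wrt N' Y'.
Proof.
move=> YY' NN' closedY i lt_i prem_i not_N'.
apply/YY'=> //; apply: closedY => //; last by rewrite NN'.
by apply: entails_gen_base_mono prem_i => j lt_j /YY'; apply.
Qed.

Lemma least_closed_ext N N' G :
  (forall i, i < size D -> N (fneg (justif D i)) <-> N' (fneg (justif D i))) ->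
  least_closed N G -> least_closed N' G.
Proof.
move=> NN' [closedG leastG]; split; first exact: closed_wrt_ext closedG.
move=> Y closedY; apply: leastG; apply: closed_wrt_ext closedY => // i lt_i.
by rewrite NN'.
Qed.

Lemma least_closed_exists N : exists G, least_closed N G.
Proof.
exists (fun i => forall Y, closed_wrt N Y -> Y i); split; last by move=> Y ? i _; apply.
move=> i lt_i prem_i not_N Y closedY; apply: (closedY) => //.
by apply: entails_gen_base_mono prem_i => j _; apply.
Qed.

Hypothesis wfW : forall psi, List.In psi W -> wf psi.
Hypothesis wfD : forall d, List.In d D -> [/\ wf (dprem d), wf (djust d) & wf (dconcl d)].

Lemma Th_Gamma_closed E G : closed_wrt E G -> Gamma_closed W D E (Th G).
Proof.
move=> closedG; split; [|split].
- by move=> w W_w; split; [apply: wfW | apply: entails_assumption; left].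
- by move=> phi wf_phi Th_phi; split=> //; apply: entails_cut Th_phi => psi [].
- move=> d /(In_nthP d0) [i lt_i ->] [_ prem_i] not_E.
  have [_ _ wf_concl] := wfD (In_nth d0 lt_i).
  split=> //; apply: entails_assumption; right; exists i; split=> //.
  exact: closedG.
Qed.

Lemma Th_least E G X :
  (forall Y, closed_wrt E Y -> forall i, i < size D -> G i -> Y i) ->
  Gamma_closed W D E X -> forall phi, Th G phi -> X phi.
Proof.
move=> leastG [X_W [X_entails X_concl]].
have X_base Y : (forall i, i < size D -> Y i -> X (conclusion D i)) ->
    forall psi, gen_base Y psi -> X psi.
  by move=> YX psi [/X_W //|[i [lt_i Yi ->]]]; apply: YX.
have G_X : forall i, i < size D -> G i -> X (conclusion D i).
  apply: leastG => i lt_i prem_i not_E; apply: X_concl; first exact: In_nth.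
    have [wf_prem _ _] := wfD (In_nth d0 lt_i).
    by apply: X_entails => //; apply: entails_mono prem_i; apply: X_base.
  exact: not_E.
move=> phi [wf_phi base_phi]; apply: X_entails => //.
by apply: entails_mono base_phi; apply: X_base.
Qed.

Lemma Gamma_Th E G : least_closed E G -> forall phi, Gamma W D E phi <-> Th G phi.
Proof.
move=> [closedG leastG] phi; split; first by apply; apply: Th_Gamma_closed.
by move=> Th_phi X closedX; apply: Th_least leastG closedX _ Th_phi.
Qed.

Lemma Th_fneg_justif G i : i < size D ->
  Th G (fneg (justif D i)) <-> entails (gen_base G) (fneg (justif D i)).
Proof.
move=> lt_i; split; first by case.
by have [_ wf_just _] := wfD (In_nth d0 lt_i); split=> //; apply: wf_fneg.
Qed.

(* The stable extension generated by [G] is [Th G]. *)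
Theorem stable_extension_iff_generating :
  has_stable_extension W D <->
  exists G, least_closed (entails (gen_base G)) G.
Proof.
split.
- move=> [E stableE]; have [G leastG] := least_closed_exists E.
  have E_Th phi : E phi <-> Th G phi by rewrite stableE; apply: Gamma_Th.
  exists G; apply: least_closed_ext leastG => i lt_i.
  by rewrite E_Th Th_fneg_justif.
- move=> [G leastG]; exists (Th G) => phi.
  have leastTh : least_closed (Th G) G.
    by apply: least_closed_ext leastG => i lt_i; rewrite Th_fneg_justif.
  by rewrite (Gamma_Th leastTh).
Qed.

End GeneratingDefaults.

Definition MTrue : mso := MNot (MEx1 0 (MNot (MEq 0 0))).
Definition MFalse : mso := MNot MTrue.
Definition MOr (t1 t2 : mso) : mso := MNot (MAnd (MNot t1) (MNot t2)).
Definition MImp (t1 t2 : mso) : mso := MNot (MAnd t1 (MNot t2)).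
Definition MIff (t1 t2 : mso) : mso := MAnd (MImp t1 t2) (MImp t2 t1).
Definition MAll1 (x : nat) (t : mso) : mso := MNot (MEx1 x (MNot t)).
Definition MAll2 (X : nat) (t : mso) : mso := MNot (MEx2 X (MNot t)).
Definition MBigAnd (ts : seq mso) : mso := foldr MAnd MTrue ts.

Section DerivedConnectives.
Variables (A : structure) (v1 : nat -> carrier A) (v2 : nat -> carrier A -> Prop).

Lemma sat_MTrue : sat A v1 v2 MTrue.
Proof. by move=> /= [u [_]]; apply. Qed.

Lemma sat_MFalse : ~ sat A v1 v2 MFalse.
Proof. by apply; apply: sat_MTrue. Qed.

Lemma sat_MNot t : sat A v1 v2 (MNot t) <-> ~ sat A v1 v2 t.
Proof. by []. Qed.

Lemma sat_MAnd t1 t2 : sat A v1 v2 (MAnd t1 t2) <-> sat A v1 v2 t1 /\ sat A v1 v2 t2.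
Proof. by []. Qed.

Lemma sat_MEx2 X t :
  sat A v1 v2 (MEx2 X t) <->
  exists P : carrier A -> Prop, (forall u, P u -> dom A u) /\ sat A v1 (upd v2 X P) t.
Proof. by []. Qed.

Lemma sat_MOr t1 t2 : sat A v1 v2 (MOr t1 t2) <-> sat A v1 v2 t1 \/ sat A v1 v2 t2.
Proof. by rewrite /=; have := classic (sat A v1 v2 t1); tauto. Qed.

Lemma sat_MImp t1 t2 : sat A v1 v2 (MImp t1 t2) <-> (sat A v1 v2 t1 -> sat A v1 v2 t2).
Proof. by rewrite /=; have := classic (sat A v1 v2 t2); tauto. Qed.

Lemma sat_MIff t1 t2 : sat A v1 v2 (MIff t1 t2) <-> (sat A v1 v2 t1 <-> sat A v1 v2 t2).
Proof.
rewrite /=; have := classic (sat A v1 v2 t1); have := classic (sat A v1 v2 t2).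
tauto.
Qed.

Lemma sat_MAll1 x t :
  sat A v1 v2 (MAll1 x t) <-> forall u, dom A u -> sat A (upd v1 x u) v2 t.
Proof.
split=> [all_t u dom_u | all_t [u [dom_u not_t]]]; last exact/not_t/all_t.
by apply: NNPP => not_t; apply: all_t; exists u.
Qed.

Lemma sat_MAll2 X t :
  sat A v1 v2 (MAll2 X t) <->
  forall P : carrier A -> Prop, (forall u, P u -> dom A u) -> sat A v1 (upd v2 X P) t.
Proof.
split=> [all_t P dom_P | all_t [P [dom_P not_t]]]; last exact/not_t/all_t.
by apply: NNPP => not_t; apply: all_t; exists P.
Qed.

Lemma sat_MBigAnd ts :
  sat A v1 v2 (MBigAnd ts) <-> forall t, List.In t ts -> sat A v1 v2 t.
Proof.
elim: ts => [|t ts IH] /=; first by split=> // _; apply: sat_MTrue.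
by rewrite -/(MBigAnd ts) IH; split=> [[? ?] t' [<-|]|all_t]; auto.
Qed.

End DerivedConnectives.

Lemma closed_MTrue b1 b2 : closed_in b1 b2 MTrue.
Proof. by rewrite /= inE eqxx. Qed.

Lemma closed_MBigAnd b1 b2 ts :
  (forall t, List.In t ts -> closed_in b1 b2 t) -> closed_in b1 b2 (MBigAnd ts).
Proof.
elim: ts => [|t ts IH] closed_ts /=; first exact: closed_MTrue.
rewrite closed_ts /=; last by left.
by apply: IH => t' ?; apply: closed_ts; right.
Qed.

Lemma over_MBigAnd B ts :
  (forall t, List.In t ts -> over_tau B t) -> over_tau B (MBigAnd ts).
Proof.
elim: ts => [|t ts IH] over_ts //=; split; first by apply: over_ts; left.
by apply: IH => t' ?; apply: over_ts; right.
Qed.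

Fixpoint shannon (h : seq bool -> bool) (cs : seq mso) : mso :=
  match cs with
  | [::] => if h [::] then MTrue else MFalse
  | c :: cs' => MOr (MAnd c (shannon (fun bs => h (true :: bs)) cs'))
                    (MAnd (MNot c) (shannon (fun bs => h (false :: bs)) cs'))
  end.

Lemma sat_shannon (A : structure) v1 v2 h cs bs : size bs = size cs ->
  (forall i, i < size cs -> sat A v1 v2 (nth MTrue cs i) <-> nth false bs i) ->
  sat A v1 v2 (shannon h cs) <-> h bs.
Proof.
elim: cs h bs => [|c cs IH] h [|b bs] // size_bs sat_cs; rewrite [shannon _ _]/=.
  by case: (h [::]); split=> //; [move=> _; apply: sat_MTrue | move/sat_MFalse].
have IH' h' : sat A v1 v2 (shannon h' cs) <-> h' bs.
  by apply: IH => [|i /(sat_cs i.+1)]; [case: size_bs|].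
rewrite sat_MOr /= !IH' (sat_cs 0) //=.
by case: b {size_bs sat_cs}; intuition.
Qed.

Lemma closed_shannon b1 b2 h cs : (forall c, List.In c cs -> closed_in b1 b2 c) ->
  closed_in b1 b2 (shannon h cs).
Proof.
elim: cs h => [|c cs IH] h closed_cs /=; first by case: (h [::]); rewrite /= inE eqxx.
have closed_c : closed_in b1 b2 c by apply: closed_cs; left.
by rewrite closed_c !IH // => c' ?; apply: closed_cs; right.
Qed.

Lemma over_shannon B h cs : (forall c, List.In c cs -> over_tau B c) ->
  over_tau B (shannon h cs).
Proof.
elim: cs h => [|c cs IH] h over_cs /=; first by case: (h [::]).
have over_c : over_tau B c by apply: over_cs; left.
have IH' h' : over_tau B (shannon h' cs) by apply: IH => c' ?; apply: over_cs; right.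
by repeat split.
Qed.

Lemma In_flatten_map (T U : Type) (f : T -> seq U) (s : seq T) y :
  List.In y (flatten (map f s)) <-> exists2 x, List.In x s & List.In y (f x).
Proof.
elim: s => [|x s IH] /=; first by split=> // [[]].
rewrite In_cat IH; split.
  by case=> [y_fx|[x' s_x' y_fx']]; [exists x; [left|] | exists x'; [right|]].
by case=> x' [<- y_fx|s_x' y_fx']; [left | right; exists x'].
Qed.

Lemma subform_trans a b c : subform a b -> subform b c -> subform a c.
Proof.
move=> ab bc; elim: bc ab => [//|phi f args a' args_a' _ IH] ab.
by apply: sf_arg args_a' _; apply: IH.
Qed.

Lemma subform_wf a b : subform a b -> wf b -> wf a.
Proof.
elim=> [//|phi f args a' args_a' _ IH] wf_b; apply: IH.
by inversion wf_b; auto.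
Qed.

Definition is_component (R : tau_sym) : bool :=
  if R is (SPrem | SJust | SConcl) then true else false.

Definition component (R : tau_sym) : default -> form :=
  match R with SPrem => dprem | SJust => djust | _ => dconcl end.

Section DomainFacts.
Variables (W : seq form) (D : seq default).

Lemma dom_subform phi psi :
  dl_dom W D (EF phi) -> subform psi phi -> dl_dom W D (EF psi).
Proof.
by move=> [r [roots_r r_phi]] phi_psi; exists r; split=> //; apply: subform_trans r_phi.
Qed.

Lemma dom_arg f args a :
  dl_dom W D (EF (App f args)) -> List.In a args -> dl_dom W D (EF a).
Proof.
by move=> dom_f args_a; apply: dom_subform dom_f _; apply: sf_arg args_a _; constructor.
Qed.

Lemma dom_W psi : List.In psi W -> dl_dom W D (EF psi).
Proof. by move=> W_psi; exists psi; split; [apply/In_cat; left | constructor]. Qed.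

Lemma dom_component R i : is_component R -> i < size D ->
  dl_dom W D (EF (component R (nth d0 D i))).
Proof.
move=> R_comp lt_i; eexists; split; last constructor.
rewrite /roots In_cat In_flatten_map; right; exists (nth d0 D i); first exact: In_nth.
by case: R R_comp => //= _; auto.
Qed.

Lemma dl_rel_component R u i : is_component R ->
  dl_rel W D R [:: u; ED i] <-> i < size D /\ u = EF (component R (nth d0 D i)).
Proof. by case: R => //= _; split=> [[j [[<-] [lt_j ->]]] | [lt_i ->]] //; exists i. Qed.

End DomainFacts.

(** * The sentence theta_extension *)

(* Set variables: 0 holds the variables made true by an assignment, 1 the
   subformulae true under it, 2 the generating defaults and 3 a competing closed
   set of defaults.  First-order variable 0 ranges over subformulae, 9 over
   defaults and 10, 11 over the premise and the justification of default 9; the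
   other first-order variables are bound locally. *)

Definition mso_arg_in (f : BoolFun) (i : nat) : mso :=
  MEx1 5 (MAnd (MRel (SConn f i) [:: 5; 0]) (MIn 5 1)).

(* A 0-ary root is recognised by its constant, any other root by its first argument. *)
Definition mso_root (f : BoolFun) : mso :=
  if arity f == 0 then MRel (SConst f) [:: 0]
  else MEx1 5 (MRel (SConn f 1) [:: 5; 0]).

Definition mso_gate (f : BoolFun) : mso :=
  MImp (mso_root f)
    (MIff (MIn 0 1) (shannon (apply_fun f) (map (mso_arg_in f) (iota 1 (arity f))))).

Definition mso_valuation (B : seq BoolFun) : mso :=
  MAll1 0 (MAnd (MImp (MRel SVar [:: 0]) (MIff (MIn 0 1) (MIn 0 0)))
                (MBigAnd (map mso_gate B))).

Definition mso_all_defaults (x : nat) (t : mso) : mso :=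
  MAll1 x (MImp (MRel SDefault [:: x]) t).

Definition mso_all_component (R : tau_sym) (x y : nat) (t : mso) : mso :=
  MAll1 x (MImp (MRel R [:: x; y]) t).

Definition mso_base (Y : nat) : mso :=
  MAnd (MAll1 6 (MImp (MRel SKb [:: 6]) (MIn 6 1)))
       (mso_all_defaults 7 (MImp (MIn 7 Y) (mso_all_component SConcl 8 7 (MIn 8 1)))).

Definition mso_lit (pos : bool) (x : nat) : mso :=
  if pos then MIn x 1 else MNot (MIn x 1).

Definition lit (pos : bool) (phi : form) : form := if pos then phi else fneg phi.

Definition mso_entails (B : seq BoolFun) (Y x : nat) (pos : bool) : mso :=
  MAll2 0 (MAll2 1 (MImp (mso_valuation B) (MImp (mso_base Y) (mso_lit pos x)))).

Definition mso_closed (B : seq BoolFun) (Y : nat) : mso :=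
  mso_all_defaults 9 (mso_all_component SPrem 10 9
    (MImp (mso_entails B Y 10 true) (mso_all_component SJust 11 9
       (MImp (MNot (mso_entails B 2 11 false)) (MIn 9 Y))))).

Definition theta_extension (B : seq BoolFun) : mso :=
  MEx2 2 (MAnd (mso_closed B 2)
    (MAll2 3 (MImp (mso_closed B 3) (mso_all_defaults 12 (MImp (MIn 12 2) (MIn 12 3)))))).

Lemma closed_mso_gate b1 b2 f : 0 \in b1 -> 1 \in b2 -> closed_in b1 b2 (mso_gate f).
Proof.
move=> b1_0 b2_1.
have closed_root : closed_in b1 b2 (mso_root f).
  by rewrite /mso_root; case: (arity f == 0); rewrite /= ?inE ?eqxx b1_0 ?orbT.
rewrite /mso_gate /= closed_root b1_0 b2_1 /= andbT andbb.
apply: closed_shannon => _ /List.in_map_iff [i [<- _]].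
by rewrite /mso_arg_in /= !inE /= b1_0 b2_1.
Qed.

Lemma over_mso_gate B f : List.In f B -> over_tau B (mso_gate f).
Proof.
move=> B_f.
have over_root : over_tau B (mso_root f).
  rewrite /mso_root; case: eqP => [|arity_f] //=.
  by split=> //; split=> //; lia.
have over_args :
    over_tau B (shannon (apply_fun f) (map (mso_arg_in f) (iota 1 (arity f)))).
  apply: over_shannon => _ /List.in_map_iff [i [<- /List.in_seq [? ?]]] /=.
  by split=> //; split=> //; split=> //; lia.
by rewrite /mso_gate /=; repeat split.
Qed.

Lemma closed_mso_gates B b1 b2 : 0 \in b1 -> 1 \in b2 ->
  closed_in b1 b2 (MBigAnd (map mso_gate B)).
Proof.
move=> b1_0 b2_1.
by apply: closed_MBigAnd => _ /List.in_map_iff [f [<- _]]; apply: closed_mso_gate.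
Qed.

Lemma over_mso_gates B : over_tau B (MBigAnd (map mso_gate B)).
Proof.
by apply: over_MBigAnd => _ /List.in_map_iff [f [<- B_f]]; apply: over_mso_gate.
Qed.

Lemma sentence_theta_extension B : sentence (theta_extension B).
Proof. by rewrite /sentence /= !closed_mso_gates. Qed.

Lemma over_theta_extension B : over_tau B (theta_extension B).
Proof. by rewrite /=; repeat split; apply: over_mso_gates. Qed.

Lemma upd_other (T : Type) (v : nat -> T) x y u : x != y -> upd v x u y = v y.
Proof. by move=> neq_xy; rewrite /upd ifN_eqC. Qed.

Definition assignment_of (S : elt -> Prop) (n : nat) : bool :=
  if excluded_middle_informative (S (EF (Var n))) then true else false.

Lemma assignment_ofP S n : assignment_of S n <-> S (EF (Var n)).
Proof. by rewrite /assignment_of; case: excluded_middle_informative. Qed.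

Section Semantics.
Variables (B : seq BoolFun) (W : seq form) (D : seq default).
Hypothesis BWD : B_default_theory B W D.

Local Notation A := (A_dl W D).

Definition var_set (a : nat -> bool) (u : elt) : Prop :=
  dl_dom W D u /\ exists n, u = EF (Var n) /\ a n.

Definition true_set (a : nat -> bool) (u : elt) : Prop :=
  dl_dom W D u /\ exists phi, u = EF phi /\ eval a phi.

Definition defaults_in (Y : nat -> Prop) (u : elt) : Prop :=
  dl_dom W D u /\ exists j, u = ED j /\ Y j.

Lemma true_set_EF a phi : dl_dom W D (EF phi) -> true_set a (EF phi) <-> eval a phi.
Proof. by move=> dom_phi; split=> [[_ [psi [[->]]]] | a_phi] //; split=> //; exists phi. Qed.

Lemma defaults_inE Y j : j < size D -> defaults_in Y (ED j) <-> Y j.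
Proof. by move=> lt_j; split=> [[_ [k [[->]]]] | Yj] //; split=> //; exists j. Qed.

Lemma isBform_default i : i < size D ->
  [/\ isBform B (premise D i), isBform B (justif D i) & isBform B (conclusion D i)].
Proof. by case: BWD => _ [BD _] /(In_nth d0) /BD [? [? ?]]. Qed.

Lemma dom_wf phi : dl_dom W D (EF phi) -> wf phi.
Proof.
have [wfW wfD] := B_default_theory_wf BWD.
move=> [r []]; rewrite /roots In_cat In_flatten_map => roots_r r_phi.
apply: subform_wf r_phi _; case: roots_r => [/wfW //|[d /wfD [wf_p wf_j wf_c]]] /=.
by case=> [<-|[<-|[<-|[<-|[]]]]] //; apply: wf_fneg.
Qed.

Lemma gen_base_dom Y psi :
  gen_base W D Y psi -> isBform B psi /\ dl_dom W D (EF psi).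
Proof.
case=> [W_psi|[i [lt_i _ ->]]].
  by split; [case: BWD => /(_ _ W_psi) | apply: dom_W].
have [_ _ B_concl] := isBform_default lt_i.
by split=> //; apply: (dom_component _ (R := SConcl)).
Qed.

Lemma sat_mso_all_defaults v1 v2 x t :
  sat A v1 v2 (mso_all_defaults x t) <->
  forall i, i < size D -> sat A (upd v1 x (ED i)) v2 t.
Proof.
have rel_x u : sat A (upd v1 x u) v2 (MRel SDefault [:: x]) <->
    exists i, u = ED i /\ i < size D by rewrite /= /upd eqxx.
rewrite sat_MAll1; split=> [all_t i lt_i | all_t u dom_u].
  by move/sat_MImp: (all_t (ED i) lt_i); apply; apply/rel_x; exists i.
by apply/sat_MImp => /rel_x [i [-> lt_i]]; apply: all_t.
Qed.

Lemma sat_mso_all_component v1 v2 R x y i t :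
  is_component R -> x != y -> v1 y = ED i -> i < size D ->
  sat A v1 v2 (mso_all_component R x y t) <->
  sat A (upd v1 x (EF (component R (nth d0 D i)))) v2 t.
Proof.
move=> R_comp neq_xy v1_y lt_i.
have rel_xy u : sat A (upd v1 x u) v2 (MRel R [:: x; y]) <->
    u = EF (component R (nth d0 D i)).
  by rewrite /= /upd eqxx ifN_eqC // v1_y dl_rel_component //; split=> [[]|->].
rewrite sat_MAll1; split=> [all_t | t_comp u dom_u].
  by move/sat_MImp: (all_t _ (dom_component W R_comp lt_i)); apply; apply/rel_xy.
by apply/sat_MImp => /rel_xy ->.
Qed.

Lemma sat_mso_base v1 v2 Y :
  sat A v1 v2 (mso_base Y) <->
  forall psi, gen_base W D (fun i => v2 Y (ED i)) psi -> v2 1 (EF psi).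
Proof.
have kb u : sat A (upd v1 6 u) v2 (MRel SKb [:: 6]) <->
    exists psi, u = EF psi /\ List.In psi W by [].
have concl i : i < size D ->
    sat A (upd v1 7 (ED i)) v2 (MImp (MIn 7 Y) (mso_all_component SConcl 8 7 (MIn 8 1)))
    <-> (v2 Y (ED i) -> v2 1 (EF (conclusion D i))).
  by move=> lt_i; rewrite sat_MImp (sat_mso_all_component _ (R := SConcl) (i := i)).
rewrite sat_MAnd sat_MAll1 sat_mso_all_defaults.
split=> [[kbs defs] psi [W_psi|[i [lt_i Yi ->]]] | base].
- by move/sat_MImp: (kbs _ (dom_W D W_psi)); apply; apply/kb; exists psi.
- by move: (defs i lt_i); rewrite concl //; apply.
- split=> [u _ | i lt_i].
    by apply/sat_MImp => /kb [psi [-> W_psi]]; apply: base; left.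
  by rewrite concl // => Yi; apply: base; right; exists i.
Qed.

Lemma sat_mso_arg_in v1 v2 f args i :
  v1 0 = EF (App f args) -> dl_dom W D (EF (App f args)) -> i < size args ->
  sat A v1 v2 (mso_arg_in f i.+1) <-> v2 1 (EF (nth (Var 0) args i)).
Proof.
move=> v1_0 dom_f lt_i /=; rewrite /upd /= v1_0; split.
  by case=> u [_ [[args' [[<-] [_ ->]]]]].
move=> T_arg; exists (EF (nth (Var 0) args i)).
split; first by apply: dom_arg dom_f _; apply: In_nth.
by split=> //; exists args; split=> //; split=> //; lia.
Qed.

Lemma sat_mso_root v1 v2 f : dl_dom W D (v1 0) ->
  sat A v1 v2 (mso_root f) <-> exists args, v1 0 = EF (App f args).
Proof.
move=> dom_x; rewrite /mso_root; case: eqP => [arity_f|arity_f] /=.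
  split=> [->|[args v1_0]]; first by exists [::].
  move: dom_x; rewrite v1_0 => /dom_wf /wf_App_size.
  by rewrite arity_f => /size0nil ->.
rewrite /upd /=; split=> [[u [_ [args [-> _]]]]|[args v1_0]]; first by exists args.
move: dom_x; rewrite v1_0 => dom_f; have size_args := wf_App_size (dom_wf dom_f).
exists (EF (nth (Var 0) args 0)); split; first by apply: dom_arg dom_f _; apply: In_nth; lia.
by exists args; split=> //; split=> //; lia.
Qed.

Lemma sat_mso_gate v1 v2 f args bs :
  v1 0 = EF (App f args) -> dl_dom W D (EF (App f args)) -> size bs = size args ->
  (forall i, i < size args -> v2 1 (EF (nth (Var 0) args i)) <-> nth false bs i) ->
  sat A v1 v2 (mso_gate f) <-> (v2 1 (EF (App f args)) <-> apply_fun f bs).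
Proof.
move=> v1_0 dom_f size_bs args_bs.
have size_args := wf_App_size (dom_wf dom_f).
have root_f : sat A v1 v2 (mso_root f) by apply/sat_mso_root; [rewrite v1_0 | exists args].
rewrite /mso_gate sat_MImp sat_MIff -size_args (@sat_shannon _ _ _ _ _ bs).
- by rewrite /= v1_0; tauto.
- by rewrite size_map size_iota.
move=> i; rewrite size_map size_iota => lt_i.
rewrite (nth_map 0) ?size_iota // nth_iota // add1n.
by rewrite (sat_mso_arg_in v2 v1_0 dom_f lt_i); apply: args_bs.
Qed.

Lemma valuation_sound v1 v2 : sat A v1 v2 (mso_valuation B) ->
  forall phi, isBform B phi -> dl_dom W D (EF phi) ->
  v2 1 (EF phi) <-> eval (assignment_of (v2 0)) phi.
Proof.
rewrite sat_MAll1 => val phi.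
elim=> [n|f args B_f _ _ IH] dom_phi; have /sat_MAnd [var_ok gates] := val _ dom_phi.
  by move/sat_MImp/(_ (ex_intro _ n erefl))/sat_MIff: var_ok; rewrite /= assignment_ofP.
move/sat_MBigAnd/(_ _ (List.in_map mso_gate _ _ B_f)): gates.
rewrite (@sat_mso_gate _ _ _ _ (map (eval (assignment_of (v2 0))) args)) ?size_map //.
  by rewrite eval_App.
move=> i lt_i; rewrite (nth_map (Var 0)) //.
by apply: IH; [apply: In_nth | apply: dom_arg dom_phi _; apply: In_nth].
Qed.

Lemma valuation_complete a v1 v2 : v2 0 = var_set a -> v2 1 = true_set a ->
  sat A v1 v2 (mso_valuation B).
Proof.
move=> v2_0 v2_1; apply/sat_MAll1 => u dom_u; apply/sat_MAnd; split.
  apply/sat_MImp => -[n u_n]; have {}u_n : u = EF (Var n) := u_n; subst u.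
  apply/sat_MIff => /=.
  rewrite v2_0 v2_1 true_set_EF //.
  by split=> [a_n | [_ [m [[->]]]]] //; split=> //; exists n.
apply/sat_MBigAnd => _ /List.in_map_iff [f [<- B_f]].
have [|no_root] := classic (sat A (upd v1 0 u) v2 (mso_root f)); last first.
  by apply/sat_MImp => /no_root.
move=> /(sat_mso_root _ _ dom_u) [args u_f]; have {}u_f : u = EF (App f args) := u_f.
subst u.
rewrite (@sat_mso_gate _ _ _ _ (map (eval a) args)) ?size_map //.
  by rewrite v2_1 true_set_EF // eval_App.
move=> i lt_i; rewrite v2_1 (nth_map (Var 0)) // true_set_EF //.
by apply: dom_arg dom_u _; apply: In_nth.
Qed.

Lemma sat_mso_lit v1 v2 a pos x phi : v1 x = EF phi ->
  (v2 1 (EF phi) <-> eval a phi) ->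
  sat A v1 v2 (mso_lit pos x) <-> eval a (lit pos phi).
Proof.
move=> v1_x T_phi; case: pos; rewrite /mso_lit /lit ?eval_fneg /= v1_x T_phi //.
exact: rwP negP.
Qed.

Lemma sat_mso_entails v1 v2 Y x pos phi :
  1 < Y -> v1 x = EF phi -> isBform B phi -> dl_dom W D (EF phi) ->
  sat A v1 v2 (mso_entails B Y x pos) <->
  entails (gen_base W D (fun i => v2 Y (ED i))) (lit pos phi).
Proof.
move=> Y_gt1 v1_x B_phi dom_phi.
have v2_Y S T : upd (upd v2 0 S) 1 T Y = v2 Y by rewrite !upd_other //; lia.
rewrite sat_MAll2; split=> [ent a base_a | ent S _].
  have := ent (var_set a) (fun u => @proj1 _ _).
  move/sat_MAll2/(_ (true_set a) (fun u => @proj1 _ _))/sat_MImp.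
  move/(_ (@valuation_complete a v1 _ erefl erefl))/sat_MImp.
  have T_phi : true_set a (EF phi) <-> eval a phi by apply: true_set_EF.
  rewrite (sat_mso_lit _ v1_x T_phi); apply; apply/sat_mso_base => psi.
  rewrite v2_Y => /[dup] /gen_base_dom [_ dom_psi] /base_a.
  by move=> a_psi; apply/true_set_EF.
apply/sat_MAll2 => T _; apply/sat_MImp => val; apply/sat_MImp => /sat_mso_base base.
apply/(sat_mso_lit _ v1_x (valuation_sound val B_phi dom_phi)); apply: ent => psi.
rewrite -(v2_Y S T) => /[dup] /gen_base_dom [B_psi dom_psi] /base.
by rewrite (valuation_sound val B_psi dom_psi).
Qed.

Lemma sat_mso_closed v1 v2 Y : 1 < Y ->
  sat A v1 v2 (mso_closed B Y) <->
  closed_wrt W D (entails (gen_base W D (fun i => v2 2 (ED i)))) (fun i => v2 Y (ED i)).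
Proof.
move=> Y_gt1; rewrite /mso_closed sat_mso_all_defaults.
suff step i : i < size D ->
    sat A (upd v1 9 (ED i)) v2
      (mso_all_component SPrem 10 9 (MImp (mso_entails B Y 10 true)
        (mso_all_component SJust 11 9 (MImp (MNot (mso_entails B 2 11 false)) (MIn 9 Y))))) <->
    (entails (gen_base W D (fun i => v2 Y (ED i))) (premise D i) ->
     ~ entails (gen_base W D (fun i => v2 2 (ED i))) (fneg (justif D i)) -> v2 Y (ED i)).
  by split=> all_i i lt_i; [rewrite -step | rewrite step]; auto.
move=> lt_i; have [B_p B_j _] := isBform_default lt_i.
have dom_p := dom_component W (R := SPrem) erefl lt_i.
have dom_j := dom_component W (R := SJust) erefl lt_i.
rewrite (sat_mso_all_component _ (R := SPrem) (i := i)) // sat_MImp.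
rewrite (sat_mso_entails _ _ Y_gt1 _ B_p dom_p) //.
rewrite (sat_mso_all_component _ (R := SJust) (i := i)) // sat_MImp sat_MNot.
by rewrite (sat_mso_entails _ _ (erefl : 1 < 2) _ B_j dom_j).
Qed.

Lemma sat_theta_extension v1 v2 :
  sat A v1 v2 (theta_extension B) <->
  exists G, least_closed W D (entails (gen_base W D G)) G.
Proof.
rewrite sat_MEx2; split.
- move=> [Gs [_ /sat_MAnd [closedG /sat_MAll2 leastG]]].
  exists (fun i => Gs (ED i)); split; first by move/(@sat_mso_closed _ _ 2 erefl): closedG.
  move=> Y closedY i lt_i Gi.
  have /sat_MImp := leastG (defaults_in Y) (fun u => @proj1 _ _).
  have closedY' : sat A v1 (upd (upd v2 2 Gs) 3 (defaults_in Y)) (mso_closed B 3).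
    apply/sat_mso_closed => //; apply: closed_wrt_ext closedY => // j lt_j.
    by rewrite /upd /= defaults_inE.
  move=> /(_ closedY') /sat_mso_all_defaults /(_ i lt_i) /sat_MImp /(_ Gi) /=.
  by rewrite /upd /= defaults_inE.
- move=> [G [closedG leastG]]; exists (defaults_in G); split; first by move=> u [].
  have G_ext j : j < size D -> G j <-> defaults_in G (ED j).
    by move=> lt_j; rewrite defaults_inE.
  apply/sat_MAnd; split.
    apply/sat_mso_closed => //; apply: closed_wrt_ext closedG => [|j lt_j].
      exact: G_ext.
    by apply: entails_gen_base_ext => k lt_k; apply: G_ext.
  apply/sat_MAll2 => Ys _; apply/sat_MImp => /(@sat_mso_closed _ _ 3 erefl) closedY.
  apply/sat_mso_all_defaults => i lt_i.
  apply/sat_MImp; rewrite /upd /= => /(G_ext _ lt_i) Gi.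
  apply: (leastG (fun j => Ys (ED j))) lt_i Gi.
  apply: closed_wrt_ext closedY => // j lt_j.
  apply: entails_gen_base_ext => k lt_k.
  by rewrite /upd /= defaults_inE.
Qed.

End Semantics.

Theorem lemma3 (B : seq BoolFun) :
  exists theta_extension : mso,
    sentence theta_extension /\ over_tau B theta_extension /\
    forall (W : seq form) (D : seq default),
      B_default_theory B W D ->
      (has_stable_extension W D <-> models (A_dl W D) theta_extension).
Proof.
exists (theta_extension B); split; first exact: sentence_theta_extension.
split; first exact: over_theta_extension.
move=> W D BWD; have [wfW wfD] := B_default_theory_wf BWD.
rewrite stable_extension_iff_generating //.
split=> [gen v1 v2 | models_theta]; first exact/(sat_theta_extension BWD v1 v2).
exact/(sat_theta_extension BWD (fun _ => ED 0) (fun _ _ => False)).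
Qed.
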